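(* Assume $W_{S,M}$ is a finite Weyl group, that $K=(k_{s,s'})$ is an integer matrix satisfying conditions (K), and that $e=\{s_+,s_-\}$ satisfies condition (B) with sequence $s_{j_0}=s_-,s_{j_1}=s_+,\dots,s_{j_n}$. Let $S'=S\setminus\{s_{j_n}\}$, $w=s_{j_1}\cdots s_{j_n}$, $\tau:W_{S'}\to W_{S/e,N}$ the isomorphism $\tau(s)=s$ for $s\notin\{s_{j_0},\dots,s_{j_n}\}$, $\tau(s_{j_\ell})=s_{j_{\ell+1}}$ ($1\le \ell\le n-1$), $\tau(s_{j_0})=s_0$, and $\sigma^1:V_{S',\mathbb Z}\to V_{S/e,\mathbb Z}$ given by $\alpha_s\mapsto\alpha_s$ for $s\notin\{s_{j_0},\dots,s_{j_n}\}$ and $\alpha_{s_{j_\ell}}\mapsto\sigma_{s_{j_1}}\cdots\sigma_{s_{j_n}}(\alpha_{s_{j_\ell}})$. Then $\sigma^1$ is a well-defined isomorphism of lattices, and for all $(\alpha,x)\in W^{\mathrm{aff}}_{S'}=V_{S',\mathbb Z}\rtimes W_{S'}$, \[ \phi^{\mathrm{aff}}(\sigma^1(\alpha),\tau(x))=(\sigma_w(\alpha),wxw^{-1})\in W^{\mathrm{aff}}_{S}. \]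
   Context: A Coxeter matrix on $S$ is a symmetric matrix $M=(m_{s,s'})$ with entries in $\mathbb Z_{\ge1}\sqcup\{\infty\}$, $m_{s,s'}=1$ iff $s=s'$; $W_{S,M}$ is generated by $S$ with relations $(ss')^{m_{s,s'}}=1$ for $m_{s,s'}\ne\infty$. Conditions (K) on a real matrix $K=(k_{s,s'})_{s,s'\in S}$: $k_{s,s}=-2$; $k_{s,s'}=0$ if $m_{s,s'}=2$; $k_{s,s'}>0$ if $m_{s,s'}\ge3$; $k_{s,s'}k_{s',s}=4\cos^2(\pi/m_{s,s'})$ if $m_{s,s'}\ne\infty$; $k_{s,s'}k_{s',s}\ge4$ if $m_{s,s'}=\infty$. Given $K$, $V_S=\bigoplus_{s\in S}\mathbb R\alpha_s$ and $\sigma_s(\alpha_{s'})=\alpha_{s'}+k_{s,s'}\alpha_s$ define a faithful representation $\sigma$ of $W_{S,M}$. When $K$ is integral, $V_{S,\mathbb Z}=\bigoplus_s\mathbb Z\alpha_s$ is stable and $W^{\mathrm{aff}}_{S}=V_{S,\mathbb Z}\rtimes W_{S,M}$ with product $(\alpha,x)(\beta,y)=(\alpha+\sigma_x\beta,xy)$. For $S'\subseteq S$, $W_{S'}$ is the subgroup generated by $S'$, $V_{S',\mathbb Z}=\bigoplus_{s\in S'}\mathbb Z\alpha_s$, and $W^{\mathrm{aff}}_{S'}=V_{S',\mathbb Z}\rtimes W_{S'}\subseteq W^{\mathrm{aff}}_S$. Edge contraction: $e=\{s_+,s_-\}$ with $m_{s_+,s_-}=3$; $S/e=(S\setminus\{s_+,s_-\})\sqcup\{s_0\}$;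 $N=(n_{s,s'})$ with $n_{s,s}=1$, $n_{s,s'}=m_{s,s'}$ for distinct $s,s'\ne s_0$, and for $s\ne s_0$: $n_{s,s_0}=m_{s,s_+}+m_{s,s_-}-2$ if $m_{s,s_+}=2$ or $m_{s,s_-}=2$, else $\infty$. $\phi:W_{S/e,N}\to W_{S,M}$ is $s\mapsto s$ ($s\ne s_0$), $s_0\mapsto s_+s_-s_+$. Put $\alpha_{s_0}=\alpha_{s_+}+\alpha_{s_-}$, $V_{S/e,\mathbb Z}=\bigoplus_{s\in S/e}\mathbb Z\alpha_s\subseteq V_{S,\mathbb Z}$, with $W_{S/e,N}$ acting by $\tilde\sigma_s(\alpha_{s'})=\alpha_{s'}+\tilde k_{s,s'}\alpha_s$, where $\tilde k_{s,s'}=k_{s,s'}$ for $s,s'\ne s_0$, $\tilde k_{s,s_0}=k_{s,s_+}+k_{s,s_-}$, $\tilde k_{s_0,s}=k_{s_+,s}+k_{s_-,s}$, $\tilde k_{s_0,s_0}=-2$. $W^{\mathrm{aff}}_{S/e}=V_{S/e,\mathbb Z}\rtimes W_{S/e,N}$ and $\phi^{\mathrm{aff}}(\alpha,x)=(\alpha,\phi(x))$. Condition (B): there exist $n\ge1$ and pairwise distinct $s_{j_0}=s_-,s_{j_1}=s_+,\dots,s_{j_n}\in S$ with $m_{s_{j_k},s_{j_{k+1}}}=3$ for $0\le k\le n-1$, and for every $1\le k\le n$ and every $s\in S$ different from $s_{j_k}$, $s_{j_{k-1}}$ and (if $k<n$) $s_{j_{k+1}}$, $m_{s_{j_k},s}=2$.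 *)

From HB Require Import structures.
From mathcomp Require Import all_boot all_order all_algebra.
From Stdlib Require Rdefinitions Raxioms RIneq Rtrigo_def Rtrigo1.

Set Implicit Arguments.
Unset Strict Implicit.
Unset Printing Implicit Defensive.

Import GRing.Theory Num.Theory.
Local Open Scope ring_scope.

Section Coxeter.
Variable S : finType.

(* Coxeter matrix: entries in Z_{>=1} ⊔ {∞}; None encodes ∞. *)
Definition coxeter_matrix (M : S -> S -> option nat) : Prop :=
  [/\ forall s t, M s t = M t s,
      forall s t, M s t = Some 1%N <-> s = t
    & forall s t m, M s t = Some m -> (0 < m)%N].

(* Words over S; W_{S,M} is the group presented by generators S and the
   relations (s t)^{m_{s,t}} = 1.  Since every s is an involution (m_{s,s}=1),
   the monoid presented by these relations is already this group, so we
   represent elements of W_{S,M} by words and equality in W_{S,M} by the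
   congruence generated by the relations. *)
Inductive cox_eq (M : S -> S -> option nat) : seq S -> seq S -> Prop :=
| cox_refl u : cox_eq M u u
| cox_sym u v : cox_eq M u v -> cox_eq M v u
| cox_trans u v x : cox_eq M u v -> cox_eq M v x -> cox_eq M u x
| cox_rel u v s t m : M s t = Some m ->
    cox_eq M (u ++ flatten (nseq m [:: s; t]) ++ v) (u ++ v).

Definition cox_finite (M : S -> S -> option nat) : Prop :=
  exists l : seq (seq S), forall u, exists2 v, v \in l & cox_eq M u v.

Definition intR (z : int) : Rdefinitions.R :=
  match z with
  | Posz k => Raxioms.INR k
  | Negz k => Rdefinitions.Ropp (Raxioms.INR k.+1)
  end.

Definition four_cos2 (m : nat) : Rdefinitions.R :=
  Rdefinitions.Rmult (Raxioms.INR 4)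
    (RIneq.Rsqr (Rtrigo_def.cos (Rdefinitions.Rdiv Rtrigo1.PI (Raxioms.INR m)))).

Definition condK (M : S -> S -> option nat) (K : S -> S -> int) : Prop :=
  [/\ forall s, K s s = -2,
      forall s t, M s t = Some 2%N -> K s t = 0,
      forall s t, (M s t = None \/ exists m, M s t = Some m /\ (3 <= m)%N) ->
                  0 < K s t,
      forall s t m, M s t = Some m -> intR (K s t * K t s) = four_cos2 m
    & forall s t, M s t = None -> Rdefinitions.Rle (Raxioms.INR 4) (intR (K s t * K t s))].

(* Condition (B) for e = {sp, sm}, with chain s_{j_k} = j k, 0 <= k <= n. *)
Definition condB (M : S -> S -> option nat) (sp sm : S) (n : nat)
    (j : nat -> S) : Prop :=
  [/\ (1 <= n)%N,
      forall a b, (a <= n)%N -> (b <= n)%N -> j a = j b -> a = b,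
      j 0%N = sm /\ j 1%N = sp,
      forall k, (k < n)%N -> M (j k) (j k.+1) = Some 3%N
    & forall k, (1 <= k <= n)%N -> forall s, s != j k -> s != j k.-1 ->
        ((k < n)%N -> s != j k.+1) -> M (j k) s = Some 2%N].

(* The lattice V_{S,Z} = ⊕_s Z α_s, as integer coordinate vectors. *)
Definition vec := {ffun S -> int}.

Definition alpha (s : S) : vec := [ffun t => (t == s)%:R].

Definition vscale (c : int) (v : vec) : vec := [ffun t => c * v t].

Definition sigma (K : S -> S -> int) (s : S) (v : vec) : vec :=
  v + vscale (\sum_t K s t * v t) (alpha s).

Definition sigma_word (K : S -> S -> int) (u : seq S) (v : vec) : vec :=
  foldr (sigma K) v u.

(* Contracted generating set S/e = (S \ {sp, sm}) ⊔ {s0}; None is s0. *)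
Definition Se (sp sm : S) := option {t : S | (t != sp) && (t != sm)}.

Definition alphaSe (sp sm : S) (t : Se sp sm) : vec :=
  match t with
  | None => alpha sp + alpha sm
  | Some t' => alpha (val t')
  end.

(* V_{S/e,Z} ⊆ V_{S,Z}: integer combinations of the α_t, t ∈ S/e. *)
Definition inVSe (sp sm : S) (v : vec) : Prop :=
  exists c : {ffun Se sp sm -> int},
    v = \sum_(t : Se sp sm) vscale (c t) (alphaSe t).

(* V_{S',Z} with S' = S \ {s_{j_n}}. *)
Definition inVS' (n : nat) (j : nat -> S) (v : vec) : Prop := v (j n) = 0.

Definition chain (n : nat) (j : nat -> S) : seq S := [seq j i | i <- iota 0 n.+1].

Definition wword (n : nat) (j : nat -> S) : seq S := [seq j i | i <- iota 1 n].

Definition sigma1_basis (K : S -> S -> int) (n : nat) (j : nat -> S) (s : S) : vec :=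
  if s \in chain n j then sigma_word K (wword n j) (alpha s) else alpha s.

Definition sigma1 (K : S -> S -> int) (n : nat) (j : nat -> S) (v : vec) : vec :=
  \sum_(s | s != j n) vscale (v s) (sigma1_basis K n j s).

(* τ on generators of W_{S'}: s_{j_0} ↦ s0, s_{j_l} ↦ s_{j_{l+1}} (1<=l<=n-1),
   s ↦ s otherwise.  (Under the hypotheses, for s ≠ s_{j_0}, s_{j_n} the
   target is never sp or sm, so the [insub] below always succeeds.) *)
Definition tau_letter (sp sm : S) (n : nat) (j : nat -> S) (s : S) : Se sp sm :=
  if s == j 0%N then (None : Se sp sm)
  else let i := index s (chain n j) in
       (insub (if (0 < i < n)%N then j i.+1 else s) : Se sp sm).

Definition tau (sp sm : S) (n : nat) (j : nat -> S) (u : seq S) : seq (Se sp sm) :=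
  map (tau_letter sp sm n j) u.

Definition phi_letter (sp sm : S) (t : Se sp sm) : seq S :=
  match t with
  | None => [:: sp; sm; sp]
  | Some t' => [:: val t']
  end.

Definition phi (sp sm : S) (u : seq (Se sp sm)) : seq S :=
  flatten (map (phi_letter (sp:=sp) (sm:=sm)) u).

(* W^aff_S = V_{S,Z} ⋊ W_{S,M}: pairs, with equality componentwise
   (second component up to the Coxeter relations). *)
Definition Waff_eq (M : S -> S -> option nat) (x y : vec * seq S) : Prop :=
  x.1 = y.1 /\ cox_eq M x.2 y.2.

Definition phi_aff (sp sm : S) (x : vec * seq (Se sp sm)) : vec * seq S :=
  (x.1, phi x.2).

End Coxeter.

(* Along the chain, s_{j_l} (l >= 1) commutes with every letter of
   w = s_{j_1} ... s_{j_n} except its neighbours, and with every letter of w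
   when it lies off the chain.  Hence sigma_w fixes alpha_t off the chain,
   sends alpha_{j_0} to alpha_{j_0} + alpha_{j_1} and, by the rank-two
   computation for m = 3 (where k = 1), sends alpha_{j_l} to alpha_{j_{l+1}}
   for 0 < l < n.  So sigma^1 a = a o chain_pred, where chain_pred moves the
   chain one step back and fixes j_0; this identifies V_{S',Z} (coordinate 0
   at j_n) with the vectors whose j_0- and j_1-coordinates agree, which is
   V_{S/e,Z}.  On words the same commutations give w t w^-1 = t off the chain
   and w s_{j_0} w^-1 = s_+ s_- s_+ = phi(s_0), while the braid relation
   s t s t s = t gives w s_{j_l} w^-1 = s_{j_{l+1}}. *)

From HB Require Import structures.
From mathcomp Require Import all_boot all_order all_algebra.
From mathcomp Require Import zify ring.
From Stdlib Require Lra Rtrigo_calc.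

Set Implicit Arguments.
Unset Strict Implicit.
Unset Printing Implicit Defensive.

Import Order.TTheory GRing.Theory Num.Theory.

Lemma four_cos2_3 : four_cos2 3 = Raxioms.INR 1.
Proof.
rewrite /four_cos2 (RIneq.INR_IZR_INZ 3) Rtrigo_calc.cos_PI3 /RIneq.Rsqr /=.
Lra.lra.
Qed.

Lemma intR_eq1 (z : int) : (0 <= z)%R -> intR z = Raxioms.INR 1 -> z = 1%R.
Proof. by case: z => // k _ /RIneq.INR_eq ->. Qed.

Section CoxeterWords.
Variables (S : finType) (M : S -> S -> option nat).

Lemma cox_eq_ctx a b u v : cox_eq M u v -> cox_eq M (a ++ u ++ b) (a ++ v ++ b).
Proof.
elim=> {u v} [u|u v _ IH|u v x _ IH1 _ IH2|u v s t m Hm].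
- exact: cox_refl.
- exact: cox_sym.
- exact: cox_trans IH1 IH2.
- by have := cox_rel (a ++ u) (v ++ b) Hm; rewrite -!catA.
Qed.

Lemma cox_eq_cat u u' v v' :
  cox_eq M u u' -> cox_eq M v v' -> cox_eq M (u ++ v) (u' ++ v').
Proof.
move=> eq_u eq_v; apply: (cox_trans (v := u' ++ v)).
  exact: (cox_eq_ctx [::] v eq_u).
by have := cox_eq_ctx u' [::] eq_v; rewrite !cats0.
Qed.

Hypothesis M_diag : forall s, M s s = Some 1%N.

Lemma cox_eq_invol s : cox_eq M [:: s; s] [::].
Proof. by have := cox_rel [::] [::] (M_diag s). Qed.

Lemma cox_eq_comm s t : M s t = Some 2%N -> cox_eq M [:: t; s] [:: s; t].
Proof.
move=> Mst; apply: (cox_trans (v := [:: s; s; t; s; t; t])); last first.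
  by have := cox_rel [:: s] [:: t] Mst.
apply: cox_sym; apply: (cox_trans (v := [:: s; s; t; s])).
  by have := cox_rel [:: s; s; t; s] [::] (M_diag t).
by have := cox_rel [::] [:: t; s] (M_diag s).
Qed.

Lemma cox_eq_braid s t : M s t = Some 3%N -> cox_eq M [:: s; t; s; t; s] [:: t].
Proof.
move=> Mst; apply: (cox_trans (v := [:: s; t; s; t; s; t; t])).
  by apply: cox_sym; have := cox_rel [:: s; t; s; t; s] [::] (M_diag t).
by have := cox_rel [::] [:: t] Mst.
Qed.

Lemma cox_eq_conj_comm s x :
  (forall a, a \in x -> M a s = Some 2%N) -> cox_eq M (x ++ s :: rev x) [:: s].
Proof.
elim: x => [|a x IH] x_comm; first exact: cox_refl.
rewrite (_ : _ ++ _ = [:: a] ++ (x ++ s :: rev x) ++ [:: a]); last first.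
  by rewrite rev_cons -cats1 /= -catA.
have x_comm' : forall b, b \in x -> M b s = Some 2%N.
  by move=> b xb; apply: x_comm; rewrite inE xb orbT.
apply: (cox_trans (v := [:: a; s; a])).
  exact: (cox_eq_ctx [:: a] [:: a] (IH x_comm')).
apply: (cox_trans (v := [:: s; a; a])).
  apply: (cox_eq_ctx [::] [:: a] (cox_sym (cox_eq_comm _))).
  by apply: x_comm; rewrite inE eqxx.
exact: (cox_eq_ctx [:: s] [::] (cox_eq_invol a)).
Qed.

Lemma cox_eq_catrev x : cox_eq M (x ++ rev x) [::].
Proof.
elim: x => [|a x IH]; first exact: cox_refl.
rewrite (_ : _ ++ _ = [:: a] ++ (x ++ rev x) ++ [:: a]); last first.
  by rewrite rev_cons -cats1 /= -catA.
apply: (cox_trans (v := [:: a; a])); last exact: cox_eq_invol.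
exact: (cox_eq_ctx [:: a] [:: a] IH).
Qed.

End CoxeterWords.

Section Reflections.
Local Open Scope ring_scope.
Variables (S : finType) (K : S -> S -> int).

Lemma vscale1 (v : vec S) : vscale 1 v = v.
Proof. by apply/ffunP => x; rewrite ffunE mul1r. Qed.

Lemma vec_expand (a : vec S) (P : pred S) :
  (forall s, ~~ P s -> a s = 0) -> a = \sum_(s | P s) vscale (a s) (alpha s).
Proof.
move=> a_out; apply/ffunP => x; rewrite sum_ffunE.
case: (boolP (P x)) => Px; last first.
  rewrite a_out // big1 // => s Ps; rewrite !ffunE.
  by case: eqP => [x_s|]; [rewrite x_s Ps in Px | rewrite mulr0].
rewrite (bigD1 x) //= big1 => [|s /andP[_ s_x]]; rewrite !ffunE.
  by rewrite eqxx mulr1 addr0.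
by rewrite eq_sym (negbTE s_x) mulr0.
Qed.

Lemma sigma_alpha s t : sigma K s (alpha t) = alpha t + vscale (K s t) (alpha s).
Proof.
rewrite /sigma; congr (_ + vscale _ _).
rewrite (bigD1 t) //= big1 => [|u ut]; rewrite !ffunE ?eqxx ?mulr1 ?addr0 //.
by rewrite (negbTE ut) mulr0.
Qed.

Lemma sigmaD s (u v : vec S) : sigma K s (u + v) = sigma K s u + sigma K s v.
Proof.
apply/ffunP => x; rewrite /sigma !ffunE.
under eq_bigr do rewrite ffunE mulrDr.
rewrite big_split /=; ring.
Qed.

Lemma sigmaZ s c (u : vec S) : sigma K s (vscale c u) = vscale c (sigma K s u).
Proof.
apply/ffunP => x; rewrite /sigma !ffunE.
under eq_bigr do rewrite ffunE mulrCA.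
rewrite -mulr_sumr; ring.
Qed.

Lemma sigma_wordD w (u v : vec S) :
  sigma_word K w (u + v) = sigma_word K w u + sigma_word K w v.
Proof. by elim: w => //= a w ->; rewrite sigmaD. Qed.

Lemma sigma_wordZ w c (u : vec S) :
  sigma_word K w (vscale c u) = vscale c (sigma_word K w u).
Proof. by elim: w => //= a w ->; rewrite sigmaZ. Qed.

Lemma sigma_word0 w : sigma_word K w 0 = 0.
Proof. by apply: (addrI (sigma_word K w 0)); rewrite -sigma_wordD !addr0. Qed.

Lemma sigma_word_sum w (P : pred S) (F : S -> vec S) :
  sigma_word K w (\sum_(s | P s) F s) = \sum_(s | P s) sigma_word K w (F s).
Proof. exact: (big_morph _ (sigma_wordD w) (sigma_word0 w)). Qed.

Lemma sigma_word_fix w t :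
  (forall a, a \in w -> K a t = 0) -> sigma_word K w (alpha t) = alpha t.
Proof.
elim: w => //= a w IH w_fix.
rewrite IH => [|b wb]; last by apply: w_fix; rewrite inE wb orbT.
rewrite sigma_alpha w_fix ?inE ?eqxx //.
by apply/ffunP => x; rewrite !ffunE mul0r addr0.
Qed.

End Reflections.

Section ContractedLattice.
Local Open Scope ring_scope.
Variables (S : finType) (sp sm : S).

Lemma phi_letter_insub x :
  x != sp -> x != sm -> phi_letter (insub x : Se sp sm) = [:: x].
Proof. by move=> x_sp x_sm; case: insubP => [u _ <- //|]; rewrite x_sp x_sm. Qed.

Hypothesis sp_neq_sm : sp != sm.

Lemma alphaSe_coord (t : Se sp sm) x : alphaSe t x = (insub x == t)%:R.
Proof.
case: insubP => [u /andP[x_sp x_sm] x_u|]; case: t => [t|] /=.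
- by rewrite ffunE -x_u (inj_eq val_inj).
- by rewrite !ffunE (negbTE x_sp) (negbTE x_sm).
- move=> x_out; rewrite ffunE; case: eqP => // x_t.
  by move: x_out; rewrite x_t (valP t).
- rewrite !ffunE negb_and !negbK => /orP[] /eqP ->; rewrite eqxx.
    by rewrite (negbTE sp_neq_sm) addr0.
  by rewrite eq_sym (negbTE sp_neq_sm) add0r.
Qed.

Lemma sum_alphaSe_coord (c : {ffun Se sp sm -> int}) x :
  (\sum_(t : Se sp sm) vscale (c t) (alphaSe t)) x = c (insub x).
Proof.
rewrite sum_ffunE (bigD1 (insub x)) //= big1 => [|t t_x].
  by rewrite ffunE alphaSe_coord eqxx mulr1 addr0.
by rewrite ffunE alphaSe_coord eq_sym (negbTE t_x) mulr0.
Qed.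

Lemma inVSeP (b : vec S) : inVSe sp sm b <-> b sp = b sm.
Proof.
split=> [[c ->]|b_eq].
  by rewrite !sum_alphaSe_coord !insubF ?eqxx ?andbF.
exists [ffun t => b (oapp val sp t)]; apply/ffunP => x.
rewrite sum_alphaSe_coord ffunE; case: insubP => [u _ <- //|].
by rewrite negb_and !negbK => /orP[] /eqP ->.
Qed.

End ContractedLattice.

Section Chain.
Variables (S : finType) (M : S -> S -> option nat) (K : S -> S -> int).
Variables (n : nat) (j : nat -> S).
Hypotheses (M_diag : forall s, M s s = Some 1%N) (M_sym : forall s t, M s t = M t s).
Hypotheses (HK : condK M K) (HB : condB M (j 1) (j 0) n j).

Lemma K_comm s t : M s t = Some 2 -> K s t = 0%R.
Proof. by case: HK => _ K_M2 _ _ _; apply: K_M2. Qed.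

Lemma K_braid s t : M s t = Some 3 -> K s t = 1%R.
Proof.
case: HK => _ _ K_pos K_cos _ Mst.
have Kst : (0 < K s t)%R by apply: K_pos; right; exists 3.
have Kts : (0 < K t s)%R by apply: K_pos; right; exists 3; rewrite M_sym.
have := K_cos _ _ _ Mst; rewrite four_cos2_3 => /intR_eq1.
rewrite (ltW (mulr_gt0 Kst Kts)) => /(_ isT) K1; nia.
Qed.

Let n_gt0 : 0 < n. Proof. by case: HB. Qed.

Let M_next k : k < n -> M (j k) (j k.+1) = Some 3.
Proof. by case: HB => _ _ _ M3 _; apply: M3. Qed.

Lemma j_inj a b : a <= n -> b <= n -> (j a == j b) = (a == b).
Proof.
by case: HB => _ j_inj' _ _ _ an bn; apply/eqP/eqP => [/j_inj'|->]; [apply|].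
Qed.

Lemma chainP t : reflect (exists2 i, i <= n & t = j i) (t \in chain n j).
Proof.
apply: (iffP mapP) => [[i]|[i i_n ->]].
  by rewrite mem_iota add0n ltnS => i_n ->; exists i.
by exists i; rewrite // mem_iota add0n ltnS.
Qed.

Lemma mem_chain i : i <= n -> j i \in chain n j.
Proof. by move=> i_n; apply/chainP; exists i. Qed.

Lemma notin_chain t i : t \notin chain n j -> i <= n -> (t == j i) = false.
Proof. by move=> t_out i_n; apply: contraNF t_out => /eqP ->; apply: mem_chain. Qed.

Lemma index_chain i : i <= n -> index (j i) (chain n j) = i.
Proof.
move=> i_n; have -> : j i = nth (j 0) (chain n j) i.
  by rewrite (nth_map 0) ?size_iota ?nth_iota.
rewrite index_uniq ?size_map ?size_iota // map_inj_in_uniq ?iota_uniq // => a b.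
by rewrite !mem_iota !add0n !ltnS => an bn /eqP; rewrite j_inj // => /eqP.
Qed.

Lemma M_chain_far i lo len :
  i <= n -> 0 < lo -> lo + len <= n.+1 -> (i.+1 < lo) || (lo + len < i) ->
  forall a, a \in map j (iota lo len) -> M a (j i) = Some 2.
Proof.
case: HB => _ _ _ _ M_chain i_n lo_gt0 len_n i_far a /mapP[k].
rewrite mem_iota => k_in ->.
by apply: M_chain => [|||k_n]; rewrite ?j_inj //; lia.
Qed.

Lemma M_chain_out t :
  t \notin chain n j -> forall a, a \in wword n j -> M a t = Some 2.
Proof.
case: HB => _ _ _ _ M_chain t_out a /mapP[k]; rewrite mem_iota => k_in ->.
by apply: M_chain => [|||k_n]; rewrite ?notin_chain //; lia.
Qed.

Lemma wword_head : wword n j = j 1 :: map j (iota 2 n.-1).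
Proof. by case: n n_gt0. Qed.

Lemma wword_split l : 0 < l < n ->
  wword n j = map j (iota 1 l.-1) ++ [:: j l; j l.+1] ++ map j (iota l.+2 (n - l.+1)).
Proof.
move=> l_in; rewrite /wword.
have -> : iota 1 n = iota 1 l.-1 ++ [:: l; l.+1] ++ iota l.+2 (n - l.+1).
  rewrite -[n in iota 1 n](_ : l.-1 + (2 + (n - l.+1)) = n); last by lia.
  rewrite !iotaD /=; congr (_ ++ _ :: _ :: iota _ _); lia.
by rewrite !map_cat.
Qed.

Lemma sigma_segment_fix i lo len :
  i <= n -> 0 < lo -> lo + len <= n.+1 -> (i.+1 < lo) || (lo + len < i) ->
  sigma_word K (map j (iota lo len)) (alpha (j i)) = alpha (j i).
Proof.
move=> i_n lo_gt0 len_n i_far; apply: sigma_word_fix => a a_in.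
exact: K_comm (M_chain_far i_n lo_gt0 len_n i_far a_in).
Qed.

Lemma sigma_wword_out t :
  t \notin chain n j -> sigma_word K (wword n j) (alpha t) = alpha t.
Proof. by move=> t_out; apply: sigma_word_fix => a /(M_chain_out t_out)/K_comm. Qed.

Lemma sigma_wword_j0 :
  sigma_word K (wword n j) (alpha (j 0)) = (alpha (j 0) + alpha (j 1))%R.
Proof.
rewrite wword_head /= sigma_segment_fix //; last by lia.
by rewrite sigma_alpha K_braid ?vscale1 // M_sym M_next.
Qed.

Lemma sigma_wword_next l :
  0 < l < n -> sigma_word K (wword n j) (alpha (j l)) = alpha (j l.+1).
Proof.
move=> l_in; rewrite (wword_split l_in) /sigma_word !foldr_cat -!/(sigma_word _ _ _).
rewrite sigma_segment_fix; [|lia..].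
rewrite /= sigma_alpha K_braid; last by rewrite M_sym M_next //; lia.
rewrite vscale1 sigmaD !sigma_alpha (K_braid (s := j l) (t := j l.+1)); last first.
  by rewrite M_next //; lia.
case: HK => -> _ _ _ _.
rewrite [X in sigma_word _ _ X](_ : _ = alpha (j l.+1)); last first.
  by apply/ffunP => x; rewrite !ffunE; ring.
by rewrite sigma_segment_fix //; lia.
Qed.

(* [index (j 0) _ = 0] and [0.-1 = 0], so [chain_pred] fixes [j 0]. *)
Definition chain_pred t := if t \in chain n j then j (index t (chain n j)).-1 else t.
Definition chain_succ t := if t \in chain n j then j (index t (chain n j)).+1 else t.

Lemma chain_pred_j i : i <= n -> chain_pred (j i) = j i.-1.
Proof. by move=> i_n; rewrite /chain_pred mem_chain // index_chain. Qed.

Lemma chain_succ_j i : i <= n -> chain_succ (j i) = j i.+1.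
Proof. by move=> i_n; rewrite /chain_succ mem_chain // index_chain. Qed.

Lemma chain_pred_out t : t \notin chain n j -> chain_pred t = t.
Proof. by rewrite /chain_pred => /negbTE ->. Qed.

Lemma chain_succ_out t : t \notin chain n j -> chain_succ t = t.
Proof. by rewrite /chain_succ => /negbTE ->. Qed.

Lemma chain_pred_neq_last t : chain_pred t != j n.
Proof.
case: (boolP (t \in chain n j)) => [/chainP[i i_n ->]|t_out].
  by rewrite chain_pred_j // j_inj //; lia.
by rewrite chain_pred_out // notin_chain.
Qed.

Lemma chain_pred_succ s : s != j n -> chain_pred (chain_succ s) = s.
Proof.
case: (boolP (s \in chain n j)) => [/chainP[i i_n ->]|s_out] s_n.
  by rewrite j_inj // in s_n; rewrite chain_succ_j // chain_pred_j //; lia.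
by rewrite chain_succ_out // chain_pred_out.
Qed.

Lemma chain_succ_pred t : chain_succ (chain_pred t) = if t == j 0 then j 1 else t.
Proof.
case: (boolP (t \in chain n j)) => [/chainP[i i_n ->]|t_out].
  rewrite chain_pred_j // chain_succ_j; last by lia.
  by rewrite j_inj //; case: i i_n.
by rewrite chain_pred_out // chain_succ_out // notin_chain.
Qed.

Lemma sigma_wword_alpha s : s != j n ->
  sigma_word K (wword n j) (alpha s) = [ffun t => ((chain_pred t == s)%:R)%R].
Proof.
move=> s_n; apply/ffunP => t; rewrite ffunE.
case: (boolP (s \in chain n j)) => [/chainP[i i_n s_i]|s_out]; last first.
  rewrite sigma_wword_out // ffunE.
  case: (boolP (t \in chain n j)) => [/chainP[k k_n ->]|t_out].
    by rewrite chain_pred_j // !(eq_sym _ s) !notin_chain //; lia.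
  by rewrite chain_pred_out.
have i_lt : i < n by move: s_n; rewrite s_i j_inj //; lia.
clear s_n; subst s; case: (boolP (t \in chain n j)) => [/chainP[k k_n ->]|t_out].
  rewrite chain_pred_j // j_inj //; last by lia.
  case: i i_n i_lt => [|i] _ i_lt.
    by rewrite sigma_wword_j0 !ffunE !j_inj //; case: k k_n => [|[|k]].
  by rewrite sigma_wword_next // ffunE j_inj //; case: k k_n.
rewrite chain_pred_out // notin_chain //.
case: i i_n i_lt => [|i] _ i_lt.
  by rewrite sigma_wword_j0 !ffunE !notin_chain.
by rewrite sigma_wword_next // ffunE notin_chain.
Qed.

Lemma sigma1_basisE s : sigma1_basis K n j s = sigma_word K (wword n j) (alpha s).
Proof. by rewrite /sigma1_basis; case: ifPn => // /sigma_wword_out ->. Qed.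

Lemma sigma1_coord a t : sigma1 K n j a t = a (chain_pred t).
Proof.
have basis_coord s :
    s != j n -> sigma1_basis K n j s t = ((chain_pred t == s)%:R)%R.
  by move=> s_n; rewrite sigma1_basisE sigma_wword_alpha // ffunE.
rewrite /sigma1 sum_ffunE (bigD1 (chain_pred t)) ?chain_pred_neq_last //=.
rewrite big1 => [|s /andP[s_n s_t]]; rewrite ffunE basis_coord ?chain_pred_neq_last //.
  by rewrite eqxx mulr1 addr0.
by rewrite eq_sym (negbTE s_t) mulr0.
Qed.

Lemma sigma1E a : inVS' n j a -> sigma1 K n j a = sigma_word K (wword n j) a.
Proof.
move=> a_n; rewrite [in RHS](@vec_expand _ a (fun s => s != j n)) => [|s]; last first.
  by rewrite negbK => /eqP ->.
by rewrite sigma_word_sum; apply: eq_bigr => s _; rewrite sigma_wordZ sigma1_basisE.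
Qed.

Let j1_neq_j0 : j 1 != j 0. Proof. by rewrite j_inj. Qed.

Lemma sigma1D a b : sigma1 K n j (a + b)%R = (sigma1 K n j a + sigma1 K n j b)%R.
Proof. by apply/ffunP => t; rewrite !ffunE !sigma1_coord ffunE. Qed.

Lemma sigma1_inVSe a : inVSe (j 1) (j 0) (sigma1 K n j a).
Proof. by apply/inVSeP => //; rewrite !sigma1_coord !chain_pred_j. Qed.

Lemma sigma1_inj a b :
  inVS' n j a -> inVS' n j b -> sigma1 K n j a = sigma1 K n j b -> a = b.
Proof.
move=> a_n b_n ab; apply/ffunP => s; case: (eqVneq s (j n)) => [->|s_n].
  by rewrite a_n b_n.
have := congr1 (fun v : vec S => v (chain_succ s)) ab.
by rewrite !sigma1_coord chain_pred_succ.
Qed.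

Lemma sigma1_surj b :
  inVSe (j 1) (j 0) b -> exists2 a, inVS' n j a & sigma1 K n j a = b.
Proof.
move=> /inVSeP-/(_ j1_neq_j0) b_eq.
exists [ffun s => if s == j n then 0%R else b (chain_succ s)].
  by rewrite /inVS' ffunE eqxx.
apply/ffunP => t.
rewrite sigma1_coord ffunE (negbTE (chain_pred_neq_last t)) chain_succ_pred.
by case: eqP => [->|].
Qed.

Lemma conj_segment i lo len :
  i <= n -> 0 < lo -> lo + len <= n.+1 -> (i.+1 < lo) || (lo + len < i) ->
  cox_eq M (map j (iota lo len) ++ j i :: rev (map j (iota lo len))) [:: j i].
Proof.
by move=> i_n lo_gt0 len_n i_far; apply: cox_eq_conj_comm => // a; apply: M_chain_far.
Qed.

Lemma wword_conj_out t :
  t \notin chain n j -> cox_eq M (wword n j ++ t :: rev (wword n j)) [:: t].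
Proof. by move=> t_out; apply: cox_eq_conj_comm => // a; apply: M_chain_out. Qed.

Lemma wword_conj_j0 : cox_eq M (wword n j ++ j 0 :: rev (wword n j)) [:: j 1; j 0; j 1].
Proof.
rewrite wword_head; set r := map j (iota 2 n.-1).
rewrite (_ : _ ++ _ = [:: j 1] ++ (r ++ j 0 :: rev r) ++ [:: j 1]); last first.
  by rewrite rev_cons -cats1 /= -catA.
have r_conj : cox_eq M (r ++ j 0 :: rev r) [:: j 0] by apply: conj_segment => //; lia.
exact: (cox_eq_ctx [:: j 1] [:: j 1] r_conj).
Qed.

Lemma wword_conj_next l :
  0 < l < n -> cox_eq M (wword n j ++ j l :: rev (wword n j)) [:: j l.+1].
Proof.
move=> l_in; rewrite (wword_split l_in).
set p := map j (iota 1 l.-1); set q := map j (iota l.+2 (n - l.+1)).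
have q_conj : cox_eq M (q ++ j l :: rev q) [:: j l] by apply: conj_segment; lia.
have p_conj : cox_eq M (p ++ j l.+1 :: rev p) [:: j l.+1] by apply: conj_segment; lia.
have braid : cox_eq M [:: j l; j l.+1; j l; j l.+1; j l] [:: j l.+1].
  by apply: cox_eq_braid => //; apply: M_next; lia.
rewrite (_ : _ ++ _ =
  (p ++ [:: j l; j l.+1]) ++ (q ++ j l :: rev q) ++ ([:: j l.+1; j l] ++ rev p)); last first.
  by rewrite !rev_cat /= -!catA.
apply: (cox_trans (cox_eq_ctx _ _ q_conj)); rewrite -!catA /=.
apply: (cox_trans _ p_conj); exact: (cox_eq_ctx p (rev p) braid).
Qed.

Lemma phi_tau_j0 : phi_letter (tau_letter (j 1) (j 0) n j (j 0)) = [:: j 1; j 0; j 1].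
Proof. by rewrite /tau_letter eqxx. Qed.

Lemma phi_tau_letter s : s != j 0 -> s != j n ->
  phi_letter (tau_letter (j 1) (j 0) n j s) = [:: chain_succ s].
Proof.
move=> s_0 s_n; rewrite /tau_letter (negbTE s_0).
case: (boolP (s \in chain n j)) => [/chainP[i i_n s_i]|s_out]; last first.
  rewrite memNindex // size_map size_iota (ltnNge n.+1) leqnSn andbF chain_succ_out //.
  by apply: phi_letter_insub; rewrite notin_chain.
subst s; rewrite j_inj // in s_0; rewrite j_inj // in s_n.
rewrite index_chain // chain_succ_j // ifT; last by lia.
by apply: phi_letter_insub; rewrite j_inj //; lia.
Qed.

Lemma wword_conj_tau s : s != j n ->
  cox_eq M (phi_letter (tau_letter (j 1) (j 0) n j s)) (wword n j ++ s :: rev (wword n j)).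
Proof.
move=> s_n; apply: cox_sym; have [->|s_0] := eqVneq s (j 0).
  by rewrite phi_tau_j0; apply: wword_conj_j0.
rewrite phi_tau_letter //.
case: (boolP (s \in chain n j)) => [/chainP[i i_n s_i]|s_out].
  subst s; rewrite j_inj // in s_0; rewrite j_inj // in s_n.
  by rewrite chain_succ_j //; apply: wword_conj_next; lia.
by rewrite chain_succ_out //; apply: wword_conj_out.
Qed.

Lemma phi_tau_conj u : all (fun s => s != j n) u ->
  cox_eq M (phi (tau (j 1) (j 0) n j u)) (wword n j ++ u ++ rev (wword n j)).
Proof.
elim: u => [_|s u IH /andP[s_n u_n]]; first by apply: cox_sym; apply: cox_eq_catrev.
apply: (cox_trans (cox_eq_cat (wword_conj_tau s_n) (IH u_n))).
set w := wword n j; have w_cancel : cox_eq M (rev w ++ w) [::].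
  by have := cox_eq_catrev M_diag (rev w); rewrite revK.
by have := cox_eq_ctx (w ++ [:: s]) (u ++ rev w) w_cancel; rewrite -!catA.
Qed.

End Chain.

Local Open Scope ring_scope.

Theorem mainTheorem4 (S : finType) (M : S -> S -> option nat)
    (K : S -> S -> int) (sp sm : S) (n : nat) (j : nat -> S) :
  coxeter_matrix M -> cox_finite M -> condK M K -> condB M sp sm n j ->
  [/\ (forall a b, sigma1 K n j (a + b) = sigma1 K n j a + sigma1 K n j b),
      (forall a, inVS' n j a -> inVSe sp sm (sigma1 K n j a)),
      (forall a b, inVS' n j a -> inVS' n j b ->
         sigma1 K n j a = sigma1 K n j b -> a = b),
      (forall b, inVSe sp sm b -> exists2 a, inVS' n j a & sigma1 K n j a = b)
    & forall (a : vec S) (u : seq S), inVS' n j a -> all (fun s => s != j n) u ->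
        Waff_eq M (phi_aff (sigma1 K n j a, tau sp sm n j u))
                  (sigma_word K (wword n j) a,
                   wword n j ++ u ++ rev (wword n j))].
Proof.
move=> [M_sym M_one _] _ HK HB; have M_diag s : M s s = Some 1%N by apply/M_one.
case: (HB) => _ _ [sm_j0 sp_j1] _ _; subst sp sm.
split=> [a b|a _|a b|b|a u a_n u_n].
- exact: sigma1D.
- exact: sigma1_inVSe.
- exact: sigma1_inj.
- exact: sigma1_surj.
- by split; [exact: (sigma1E HK HB) | exact: (phi_tau_conj M_diag HB)].
Qed.
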